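(* Fix any $\theta=(A,B)$ with $A\in\mathbb{R}^{p\times d}$, $B\in\mathbb{R}^{d\times d}$ and let $\theta^{\star}$ be the projection of $\theta$ onto $\mathcal{S}$ in the $P$-norm, and $\Delta=\theta-\theta^{\star}$. Then: 1. The matrix $\Delta^{\top}P\theta^{\star}\Sigma$ is symmetric. 2. $K_0 \le \sigma_d^2(P^{1/2}\theta^{\star}\Sigma)$ and $\sigma_1^2(P^{1/2}\theta^{\star}\Sigma)\le K_1$, where $K_0 = 2\sigma_d(M\Sigma^{1/2})\sigma_d(\Sigma)$ and $K_1 = 2\sigma_1(M\Sigma^{1/2})\sigma_1(\Sigma)$.
   Context: $\Sigma\in\mathbb{R}^{d\times d}$ is positive definite, $M\in\mathbb{R}^{p\times d}$ with $p\ge d$ and $M\Sigma^{1/2}$ of full column rank. Let $U\Gamma V^{\top}$ be an SVD of $M\Sigma^{1/2}$ with $U\in\mathbb{R}^{p\times d}$, $V\in\mathbb{R}^{d\times d}$, $U^{\top}U=V^{\top}V=I_d$, $\Gamma$ diagonal positive definite. $\mathcal{S}=\left\{\begin{bmatrix}U\Gamma^{1/2}J^{\top}\Sigma^{-1/2}\\ \Sigma^{-1/2}V\Gamma^{1/2}J^{\top}\Sigma^{-1/2}\end{bmatrix}: J\in\mathbb{O}_d\right\}$. $P=\begin{bmatrix}I_p&0\\0&\Sigma\end{bmatrix}$, $\|\theta\|_P=\sqrt{\mathrm{Tr}(\theta^{\top}P\theta)}$. $\sigma_i$ denote ordered singular values, largest first. *)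

From mathcomp Require Import all_boot all_order all_algebra.
From mathcomp Require Import reals.
Set Implicit Arguments. Unset Strict Implicit. Unset Printing Implicit Defensive.
Import Order.TTheory GRing.Theory Num.Theory.
Local Open Scope ring_scope.

Section Defs.
Variable R : realType.

Definition posdef n (S : 'M[R]_n) : Prop :=
  S^T = S /\ forall x : 'cV[R]_n, x != 0 -> 0 < (x^T *m S *m x) 0 0.

Definition orthogonal n (J : 'M[R]_n) : Prop := J^T *m J = 1%:M.

(* thin SVD X = U diag(s) V^T, U with orthonormal columns, V orthogonal,
   s entrywise nonnegative (no ordering imposed) *)
Definition is_svd m n (X : 'M[R]_(m, n)) (U : 'M[R]_(m, n)) (s : 'rV[R]_n)
  (V : 'M[R]_n) : Prop :=
  [/\ U^T *m U = 1%:M, V^T *m V = 1%:M, (forall i, 0 <= s 0 i)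
    & X = U *m diag_mx s *m V^T].

Definition singvals m n (X : 'M[R]_(m, n)) (s : 'rV[R]_n) : Prop :=
  (forall i j : 'I_n, (i <= j)%N -> s 0 j <= s 0 i) /\
  exists U V, is_svd X U s V.

Definition Pnorm m n (P : 'M[R]_m) (th : 'M[R]_(m, n)) : R :=
  Num.sqrt (\tr (th^T *m P *m th)).

Definition diag_sqrt n (g : 'rV[R]_n) : 'M[R]_n := diag_mx (map_mx Num.sqrt g).

Definition Selem p d (U : 'M[R]_(p, d)) (g : 'rV[R]_d) (V : 'M[R]_d)
  (S12 : 'M[R]_d) (J : 'M[R]_d) : 'M[R]_(p + d, d) :=
  col_mx (U *m diag_sqrt g *m J^T *m invmx S12)
         (invmx S12 *m V *m diag_sqrt g *m J^T *m invmx S12).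

Definition inS p d U g V S12 (th : 'M[R]_(p + d, d)) : Prop :=
  exists J, orthogonal J /\ th = @Selem p d U g V S12 J.

Definition Pmat p d (Sigma : 'M[R]_d) : 'M[R]_(p + d) := block_mx 1%:M 0 0 Sigma.
End Defs.

(* θ* = X J^T Σ^(-1/2) with X = [U Γ^(1/2); Σ^(-1/2) V Γ^(1/2)] and J orthogonal minimising
   the P-distance to θ.  Composing J with a rotation of a coordinate plane, rationally
   parametrised by t, turns the squared distance into a quartic in t that is minimal at
   t = 0, so its linear coefficient vanishes.  Over all planes this says that
   J^T Σ^(-1/2) Δ^T P X is symmetric, and conjugating by J^T Σ^(1/2) gives the symmetry of
   Δ^T P θ* Σ.
   For the bounds, P^(1/2) θ* Σ = [U Γ^(1/2); V Γ^(1/2)] J^T Σ^(1/2), so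
   |P^(1/2) θ* Σ x|^2 = 2 |Γ^(1/2) J^T Σ^(1/2) x|^2 lies between 2 γ_min x^T Σ x and
   2 γ_max x^T Σ x; the γ_i lie between the extreme singular values of M Σ^(1/2), and
   x^T Σ x between σ_d(Σ) |x|^2 and σ_1(Σ) |x|^2. *)

From Pilot Require Import Defs.
From mathcomp Require Import all_boot all_order all_algebra.
From mathcomp Require Import reals.
From mathcomp Require Import ring lra.
Import Order.TTheory GRing.Theory Num.Theory.
Set Implicit Arguments. Unset Strict Implicit. Unset Printing Implicit Defensive.
Local Open Scope ring_scope.

Section SquaredNorm.
Variable R : realFieldType.
Implicit Types (m n : nat).

Definition sqnorm n (x : 'cV[R]_n) : R := (x^T *m x) 0 0.

Lemma sqnormE n (x : 'cV[R]_n) : sqnorm x = \sum_i x i 0 ^+ 2.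
Proof. by rewrite /sqnorm mxE; apply: eq_bigr => i _; rewrite mxE expr2. Qed.

Lemma sqnorm_ge0 n (x : 'cV[R]_n) : 0 <= sqnorm x.
Proof. by rewrite sqnormE; apply: sumr_ge0 => i _; apply: sqr_ge0. Qed.

Lemma sqnorm_eq0 n (x : 'cV[R]_n) : sqnorm x = 0 -> x = 0.
Proof.
rewrite sqnormE => /psumr_eq0P x0; apply/matrixP => i j; rewrite ord1 mxE.
by apply/eqP; rewrite -sqrf_eq0; apply/eqP; apply: x0 => // k _; apply: sqr_ge0.
Qed.

Lemma sqnorm_col_mx m n (a : 'cV[R]_m) (b : 'cV[R]_n) :
  sqnorm (col_mx a b) = sqnorm a + sqnorm b.
Proof. by rewrite /sqnorm tr_col_mx mul_row_col mxE. Qed.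

Lemma sqnorm_isometry m n (U : 'M[R]_(m, n)) (z : 'cV[R]_n) :
  U^T *m U = 1%:M -> sqnorm (U *m z) = sqnorm z.
Proof. by move=> UU; rewrite /sqnorm trmx_mul mulmxA -(mulmxA z^T) UU mulmx1. Qed.

Lemma sqnorm_diag_mx_bounds n (s : 'rV[R]_n) (lo hi : R) (w : 'cV[R]_n) :
  (forall i, lo <= s 0 i ^+ 2 <= hi) ->
  lo * sqnorm w <= sqnorm (diag_mx s *m w) <= hi * sqnorm w.
Proof.
move=> s_bounds; rewrite !sqnormE !mulr_sumr.
have -> : \sum_i (diag_mx s *m w) i 0 ^+ 2 = \sum_i s 0 i ^+ 2 * w i 0 ^+ 2.
  by apply: eq_bigr => i _; rewrite mul_diag_mx mxE exprMn.
apply/andP; split; apply: ler_sum => i _; apply: ler_wpM2r; rewrite ?sqr_ge0 //;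
  by case/andP: (s_bounds i).
Qed.

(* Expanding [|nu z - B z|^2 >= 0]; no symmetry of [B] is needed. *)
Lemma quad_le_sqnorm n (B : 'M[R]_n) (nu : R) : 0 <= nu ->
  (forall z, sqnorm (B *m z) <= nu ^+ 2 * sqnorm z) ->
  forall z, (z^T *m B *m z) 0 0 <= nu * sqnorm z.
Proof.
move=> nu_ge0 B_le z.
have := sqnorm_ge0 (nu *: z - B *m z).
have -> : sqnorm (nu *: z - B *m z) =
    nu ^+ 2 * sqnorm z - 2 * nu * (z^T *m B *m z) 0 0 + sqnorm (B *m z).
  have BzTz : (B *m z)^T *m z = (z^T *m B *m z)^T by rewrite !trmx_mul trmxK mulmxA.
  rewrite /sqnorm [(_ - _)^T]linearB /= [(nu *: z)^T]linearZ /= mulmxBl !mulmxBr.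
  rewrite -!scalemxAl -!scalemxAr BzTz -mulmxA.
  set a := z^T *m z; set b := z^T *m (B *m z); set c := (B *m z)^T *m (B *m z).
  by rewrite !mxE; ring.
have := B_le z; have := sqnorm_ge0 z.
case: (ltrgt0P nu) nu_ge0 => [nu_gt0|//|->] _ z_ge0 Bz_le ineq; last first.
  have /sqnorm_eq0 Bz0 : sqnorm (B *m z) = 0.
    by apply/eqP; rewrite eq_le sqnorm_ge0 andbT; move: Bz_le; rewrite expr0n mul0r.
  by rewrite -mulmxA Bz0 mulmx0 mxE mul0r.
rewrite -(ler_pM2l (_ : 0 < 2 * nu)) ?mulr_gt0 //; nra.
Qed.

Lemma mxtrace_tr_mul_ge0 m n (A : 'M[R]_(m, n)) : 0 <= \tr (A^T *m A).
Proof.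
apply: sumr_ge0 => i _; rewrite mxE; apply: sumr_ge0 => k _.
by rewrite mxE -expr2 sqr_ge0.
Qed.

End SquaredNorm.

Section SingularValues.
Variable R : realType.
Implicit Types (m n : nat).

Lemma is_svd_sqnorm_bounds m n (X U : 'M[R]_(m, n)) (s : 'rV[R]_n) (V : 'M[R]_n)
    (lo hi : R) (x : 'cV[R]_n) :
  is_svd X U s V -> (forall i, lo <= s 0 i ^+ 2 <= hi) ->
  lo * sqnorm x <= sqnorm (X *m x) <= hi * sqnorm x.
Proof.
case=> UU VV _ -> s_bounds; rewrite -!mulmxA sqnorm_isometry //.
have VTiso : V^T^T *m V^T = 1%:M by rewrite trmxK mulmx1C.
by rewrite -(sqnorm_isometry x VTiso) sqnorm_diag_mx_bounds.
Qed.

Lemma is_svd_sqnorm_col m n (X U : 'M[R]_(m, n)) (s : 'rV[R]_n) (V : 'M[R]_n)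
    (k : 'I_n) :
  is_svd X U s V -> sqnorm (X *m col k V) = s 0 k ^+ 2 /\ sqnorm (col k V) = 1.
Proof.
case=> UU VV _ ->; rewrite colE -!mulmxA (sqnorm_isometry _ UU).
rewrite (sqnorm_isometry _ VV) (mulmxA V^T) VV mul1mx !sqnormE; split.
  rewrite (bigD1 k) //= big1 => [|i ik]; last first.
    by rewrite mul_diag_mx !mxE eqxx andbT (negPf ik) mulr0 expr0n.
  by rewrite mul_diag_mx !mxE !eqxx mulr1 addr0.
rewrite (bigD1 k) //= big1 => [|i ik]; last by rewrite mxE eqxx andbT (negPf ik) expr0n.
by rewrite mxE !eqxx expr1n addr0.
Qed.

Lemma singvals_sqr_bounds m n (X : 'M[R]_(m, n.+1)) (s : 'rV[R]_n.+1) :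
  singvals X s -> forall i, s 0 ord_max ^+ 2 <= s 0 i ^+ 2 <= s 0 ord0 ^+ 2.
Proof.
case=> s_sorted [? [? [_ _ s_ge0 _]]] i.
rewrite !ler_sqr ?nnegrE //; apply/andP; split; apply: s_sorted => //; exact: leq_ord.
Qed.

Lemma singvals_sqnorm_bounds m n (X : 'M[R]_(m, n.+1)) (s : 'rV[R]_n.+1)
    (x : 'cV[R]_n.+1) :
  singvals X s ->
  s 0 ord_max ^+ 2 * sqnorm x <= sqnorm (X *m x) <= s 0 ord0 ^+ 2 * sqnorm x.
Proof.
move=> sv; have [_ [U [V svd]]] := sv.
exact: is_svd_sqnorm_bounds svd (singvals_sqr_bounds sv).
Qed.

Lemma singvals_extreme_bounds m n (X : 'M[R]_(m, n.+1)) (s : 'rV[R]_n.+1)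
    (lo hi : R) :
  singvals X s -> (forall x, lo * sqnorm x <= sqnorm (X *m x) <= hi * sqnorm x) ->
  lo <= s 0 ord_max ^+ 2 /\ s 0 ord0 ^+ 2 <= hi.
Proof.
case=> _ [U [V svd]] X_bounds.
have [Xmax max1] := is_svd_sqnorm_col ord_max svd.
have [X0 col01] := is_svd_sqnorm_col ord0 svd.
have /andP[+ _] := X_bounds (col ord_max V).
have /andP[_ +] := X_bounds (col ord0 V).
by rewrite Xmax max1 X0 col01 !mulr1.
Qed.

Lemma singvals_is_svd_bounds m n (X U : 'M[R]_(m, n.+1)) (s g : 'rV[R]_n.+1)
    (V : 'M[R]_n.+1) :
  singvals X s -> is_svd X U g V -> forall i, s 0 ord_max <= g 0 i <= s 0 ord0.
Proof.
move=> sv svd i; have [Xi coli] := is_svd_sqnorm_col i svd.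
have [_ _ g_ge0 _] := svd; have [_ [? [? [_ _ s_ge0 _]]]] := sv.
have := singvals_sqnorm_bounds (col i V) sv.
rewrite Xi coli !mulr1 => /andP[lo hi].
by apply/andP; split; rewrite -ler_sqr ?nnegrE.
Qed.

Lemma quad_singvals_bounds n (S Sig : 'M[R]_n.+1) (s : 'rV[R]_n.+1)
    (x : 'cV[R]_n.+1) :
  S^T = S -> S \in unitmx -> S *m S = Sig -> singvals Sig s ->
  s 0 ord_max * sqnorm x <= (x^T *m Sig *m x) 0 0 <= s 0 ord0 * sqnorm x.
Proof.
move=> ST S_unit SS sv; have [_ [? [? [_ _ s_ge0 _]]]] := sv.
apply/andP; split; last first.
  by apply: quad_le_sqnorm => // z; case/andP: (singvals_sqnorm_bounds z sv).
have quadE : (x^T *m Sig *m x) 0 0 = sqnorm (S *m x).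
  by rewrite /sqnorm trmx_mul ST -SS !mulmxA.
case: (ltrgt0P (s 0 ord_max)) (s_ge0 ord_max) => [mu_gt0|//|->] _; last first.
  by rewrite mul0r quadE sqnorm_ge0.
(* Bound [|x|^2] through the quadratic form of [Sig^-1], whose norm is at most [mu^-1]. *)
set mu := s 0 ord_max.
have SigSiSi : Sig *m (invmx S *m invmx S) = 1%:M.
  by rewrite -SS mulmxA -(mulmxA S) mulmxV // mulmx1 mulmxV.
have SiSi_le z : sqnorm (invmx S *m invmx S *m z) <= mu^-1 ^+ 2 * sqnorm z.
  have /andP[+ _] := singvals_sqnorm_bounds (invmx S *m invmx S *m z) sv.
  by rewrite mulmxA SigSiSi mul1mx exprVn ler_pdivlMl // exprn_gt0.
have := quad_le_sqnorm (ltW (_ : 0 < mu^-1)) SiSi_le (S *m x).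
have -> : (S *m x)^T *m (invmx S *m invmx S) *m (S *m x) = x^T *m x.
  rewrite trmx_mul ST -!mulmxA (mulmxA (invmx S) S) mulVmx // mul1mx.
  by rewrite (mulmxA S) mulmxV // mul1mx.
by rewrite invr_gt0 -quadE ler_pdivlMl // => /(_ mu_gt0).
Qed.

End SingularValues.

Section WeightedNorm.
Variable R : realType.
Implicit Types (m n : nat).

Lemma posdef_unitmx n (S : 'M[R]_n) : posdef S -> S \in unitmx.
Proof.
case=> _ S_pos; rewrite unitmxE unitfE; apply/negP => /det0P [v v_neq0 vS0].
have : v^T != 0 by rewrite -(inj_eq (@trmx_inj _ _ _)) trmxK trmx0.
by move/S_pos; rewrite trmxK vS0 mul0mx mxE ltxx.
Qed.

Lemma Pnorm_le_mxtrace m n (P Q : 'M[R]_m) (X Z : 'M[R]_(m, n)) :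
  P = Q^T *m Q -> Pnorm P X <= Pnorm P Z ->
  \tr (X^T *m P *m X) <= \tr (Z^T *m P *m Z).
Proof.
move=> ->; rewrite /Pnorm ler_sqrt //.
by rewrite mulmxA -trmx_mul -mulmxA mxtrace_tr_mul_ge0.
Qed.

End WeightedNorm.

Section FirstOrderCondition.
Variable R : realFieldType.
Implicit Types (m n : nat).

Lemma linear_le_sqr_le0 (b C : R) : 0 <= C ->
  (forall t, 0 < t <= 1 -> b * t <= C * t ^+ 2) -> b <= 0.
Proof.
move=> C_ge0 b_le; rewrite leNgt; apply/negP => b_gt0.
have bC_gt0 : 0 < b + C by rewrite ltr_wpDr.
set t := b / (b + C).
have t_gt0 : 0 < t by rewrite divr_gt0.
have t_le1 : t <= 1 by rewrite ler_pdivrMr // mul1r lerDl.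
have := b_le t; rewrite t_gt0 t_le1 => /(_ isT).
rewrite expr2 [C * _]mulrA ler_pM2r // /t mulrA ler_pdivlMr // => b_le_Cb.
have : b * b <= 0 by lra.
by rewrite leNgt mulr_gt0.
Qed.

Lemma quartic_ge0_lin_coef0 (b c2 c3 c4 : R) :
  (forall t, 0 <= b * t + c2 * t ^+ 2 + c3 * t ^+ 3 + c4 * t ^+ 4) -> b = 0.
Proof.
move=> f_ge0; set C := `|c2| + `|c3| + `|c4|.
have C_ge0 : 0 <= C by rewrite !addr_ge0.
have higher_le (t c : R) k : 0 < t <= 1 -> c * t ^+ k.+2 <= `|c| * t ^+ 2.
  case/andP=> t_gt0 t_le1; apply: le_trans (ler_norm _) _.
  rewrite normrM normrX (gtr0_norm t_gt0) -addn2 exprD mulrCA.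
  apply: ler_piMl; first exact: mulr_ge0 (normr_ge0 c) (sqr_ge0 t).
  exact: exprn_ile1 (ltW t_gt0) t_le1.
have bound (b' c3' t : R) : `|c3'| = `|c3| -> 0 < t <= 1 ->
    0 <= b' * t + c2 * t ^+ 2 + c3' * t ^+ 3 + c4 * t ^+ 4 -> - b' * t <= C * t ^+ 2.
  move=> c3E t01 ft; have := higher_le t c2 0 t01; have := higher_le t c3' 1 t01.
  have := higher_le t c4 2 t01; rewrite c3E /C; lra.
apply/eqP; rewrite eq_le; apply/andP; split.
  apply: (linear_le_sqr_le0 C_ge0) => t t01; rewrite -[b]opprK.
  apply: (bound _ (- c3)) => //; first by rewrite normrN.
  have -> : - b * t + c2 * t ^+ 2 + - c3 * t ^+ 3 + c4 * t ^+ 4 =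
      b * - t + c2 * (- t) ^+ 2 + c3 * (- t) ^+ 3 + c4 * (- t) ^+ 4 by ring.
  exact: f_ge0.
by rewrite -oppr_le0; apply: (linear_le_sqr_le0 C_ge0) => t t01; exact: bound.
Qed.

(* The circle [(1 + a)^2 + s^2 = 1] is parametrised rationally by
   [a = -2t^2 / (1 + t^2)], [s = 2t / (1 + t^2)]. *)
Lemma circle_form_ge0_sin_coef0 (x l q1 q2 q3 : R) :
  (forall a s, (1 + a) ^+ 2 + s ^+ 2 = 1 ->
     0 <= - (2 * (a * x + s * l)) + a ^+ 2 * q1 + a * s * q2 + s ^+ 2 * q3) ->
  l = 0.
Proof.
move=> f_ge0; suff : - 4 * l = 0 by move/eqP; rewrite mulf_eq0 oppr_eq0 pnatr_eq0 => /eqP.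
apply: (@quartic_ge0_lin_coef0 _ (4 * x + 4 * q3) (- 4 * l - 4 * q2) (4 * x + 4 * q1)) => t.
have w_gt0 : 0 < 1 + t ^+ 2 by rewrite ltr_pwDl ?sqr_ge0.
have w_neq0 : 1 + t ^+ 2 != 0 by rewrite gt_eqF.
have := f_ge0 (- 2 * t ^+ 2 / (1 + t ^+ 2)) (2 * t / (1 + t ^+ 2)).
have -> : (1 + - 2 * t ^+ 2 / (1 + t ^+ 2)) ^+ 2 + (2 * t / (1 + t ^+ 2)) ^+ 2 = 1 by field.
move=> /(_ erefl) /(mulr_ge0)/(_ (sqr_ge0 (1 + t ^+ 2))).
by congr (0 <= _); field.
Qed.

Lemma rot_comb_orthogonal n (D K : 'M[R]_n) (a s : R) :
  D^T = D -> K^T = - K -> D *m D = D -> D *m K = K -> K *m D = K -> K *m K = - D ->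
  (1 + a) ^+ 2 + s ^+ 2 = 1 ->
  (1%:M + a *: D + s *: K)^T *m (1%:M + a *: D + s *: K) = 1%:M.
Proof.
move=> DT KT DD DK KD KK on_circle.
have circleE : 2 * a + a ^+ 2 + s ^+ 2 = 0 by move: on_circle; rewrite !expr2; lra.
have -> : (1%:M + a *: D + s *: K)^T = 1%:M + a *: D - s *: K.
  by rewrite !linearD /= !linearZ /= trmx1 DT KT scalerN.
rewrite !mulmxDl !mulNmx !mul1mx !mulmxDr !mulmx1 -!scalemxAl -!scalemxAr DD DK KD KK.
apply/matrixP => k l; rewrite !mxE.
by rewrite -[RHS]addr0 -(mulr0 (D k l)) -circleE; ring.
Qed.

Section PlaneRotation.
Variables (n : nat) (i j : 'I_n).
Hypothesis neq_ij : i != j.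

Definition rot_diag : 'M[R]_n := delta_mx i i + delta_mx j j.
Definition rot_skew : 'M[R]_n := delta_mx j i - delta_mx i j.

Let neq_ji : (j == i) = false.
Proof. by rewrite eq_sym (negPf neq_ij). Qed.

Lemma plane_rot_orthogonal a s : (1 + a) ^+ 2 + s ^+ 2 = 1 ->
  (1%:M + a *: rot_diag + s *: rot_skew)^T *m (1%:M + a *: rot_diag + s *: rot_skew)
    = 1%:M.
Proof.
rewrite /rot_diag /rot_skew; apply: rot_comb_orthogonal.
- by rewrite linearD /= !trmx_delta.
- by rewrite linearB /= !trmx_delta opprB.
- by rewrite mulmxDl !mulmxDr !mul_delta_mx_cond !eqxx neq_ji (negPf neq_ij) !mulr0n !mulr1n addr0 add0r.
- by rewrite mulmxDl !mulmxBr !mul_delta_mx_cond !eqxx neq_ji (negPf neq_ij) !mulr0n !mulr1n subr0 sub0r addrC.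
- by rewrite mulmxBl !mulmxDr !mul_delta_mx_cond !eqxx neq_ji (negPf neq_ij) !mulr0n !mulr1n addr0 add0r.
by rewrite mulmxBl !mulmxBr !mul_delta_mx_cond !eqxx neq_ji (negPf neq_ij) !mulr0n !mulr1n subr0 sub0r opprD addrC.
Qed.

End PlaneRotation.

Lemma mxtrace_mul_delta n (A : 'M[R]_n) (i j : 'I_n) : \tr (A *m delta_mx i j) = A j i.
Proof.
rewrite /mxtrace (bigD1 j) //= big1 ?addr0 => [|k neq_kj].
  rewrite mxE (bigD1 i) //= big1 ?addr0 => [|l neq_li]; first by rewrite mxE !eqxx mulr1.
  by rewrite mxE (negPf neq_li) mulr0.
by rewrite mxE big1 // => l _; rewrite mxE (negPf neq_kj) andbF mulr0.
Qed.

Lemma mxtrace_form_subr m n (P : 'M[R]_m) (X Z : 'M[R]_(m, n)) : P^T = P ->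
  \tr ((X - Z)^T *m P *m (X - Z)) =
  \tr (X^T *m P *m X) - 2 * \tr (X^T *m P *m Z) + \tr (Z^T *m P *m Z).
Proof.
move=> PT; have ZX : \tr (Z^T *m P *m X) = \tr (X^T *m P *m Z).
  by rewrite -mxtrace_tr !trmx_mul trmxK PT mulmxA.
rewrite [(X - Z)^T]linearB /= !mulmxBl !mulmxBr !raddfB /= ZX; ring.
Qed.

Lemma mxtrace_form_combr m n (P : 'M[R]_m) (X Z1 Z2 : 'M[R]_(m, n)) (a s : R) :
  \tr (X^T *m P *m (a *: Z1 + s *: Z2)) =
  a * \tr (X^T *m P *m Z1) + s * \tr (X^T *m P *m Z2).
Proof. by rewrite mulmxDr -!scalemxAr mxtraceD !mxtraceZ. Qed.

Lemma mxtrace_form_comb m n (P : 'M[R]_m) (Z1 Z2 : 'M[R]_(m, n)) (a s : R) :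
  \tr ((a *: Z1 + s *: Z2)^T *m P *m (a *: Z1 + s *: Z2)) =
  a ^+ 2 * \tr (Z1^T *m P *m Z1)
  + a * s * (\tr (Z1^T *m P *m Z2) + \tr (Z2^T *m P *m Z1))
  + s ^+ 2 * \tr (Z2^T *m P *m Z2).
Proof.
rewrite [(_ + _)^T]linearD /= ![(_ *: _)^T]linearZ /= !mulmxDl -!scalemxAl.
by rewrite mxtraceD !mxtraceZ !mxtrace_form_combr; ring.
Qed.

Section OrthogonalMinimizer.
Variables (m n : nat) (P : 'M[R]_m) (X C : 'M[R]_(m, n)) (Y : 'M[R]_n).
Hypothesis PT : P^T = P.
Hypothesis minimizer : forall G : 'M[R]_n, G^T *m G = 1%:M ->
  \tr (X^T *m P *m X) <=
  \tr ((X - C *m (G - 1%:M)^T *m Y)^T *m P *m (X - C *m (G - 1%:M)^T *m Y)).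

(* The derivative of the objective along the rotations of the plane [(i, j)] vanishes. *)
Lemma minimizer_skew_trace (i j : 'I_n) : i != j ->
  \tr (X^T *m P *m (C *m (rot_skew i j)^T *m Y)) = 0.
Proof.
move=> neq_ij; set ZD := C *m (rot_diag i j)^T *m Y; set ZK := C *m _ *m Y.
apply: (@circle_form_ge0_sin_coef0 (\tr (X^T *m P *m ZD)) _ (\tr (ZD^T *m P *m ZD))
  (\tr (ZD^T *m P *m ZK) + \tr (ZK^T *m P *m ZD)) (\tr (ZK^T *m P *m ZK))) => a s on_circle.
have := minimizer (plane_rot_orthogonal neq_ij on_circle).
have -> : C *m (1%:M + a *: rot_diag i j + s *: rot_skew i j - 1%:M)^T *m Y = a *: ZD + s *: ZK.
  rewrite -(addrA 1%:M) addrC addrK linearD /= !linearZ /= mulmxDr mulmxDl.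
  by rewrite -!scalemxAr -!scalemxAl.
rewrite mxtrace_form_subr // mxtrace_form_combr mxtrace_form_comb; lra.
Qed.

Lemma minimizer_sym : (Y *m X^T *m P *m C)^T = Y *m X^T *m P *m C.
Proof.
apply/matrixP => r c; rewrite mxE; case: (eqVneq r c) => [-> //|neq_rc].
have := minimizer_skew_trace neq_rc.
rewrite !mulmxA mxtrace_mulC !mulmxA /rot_skew linearB /= !trmx_delta.
by rewrite mulmxBr raddfB /= !mxtrace_mul_delta => /eqP; rewrite subr_eq0 => /eqP.
Qed.

End OrthogonalMinimizer.
End FirstOrderCondition.

Section ProjectionOntoS.
Variables (R : realType) (p d : nat) (Sigma S12 : 'M[R]_d.+1).
Variables (U : 'M[R]_(p, d.+1)) (g : 'rV[R]_d.+1) (V : 'M[R]_d.+1).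
Hypotheses (S12T : S12^T = S12) (S12_unit : S12 \in unitmx) (S12S12 : S12 *m S12 = Sigma).

Local Notation Selem := (Selem U g V S12).
Local Notation P12 := (block_mx 1%:M 0 0 S12 : 'M[R]_(p + d.+1)).

Definition Sfactor : 'M[R]_(p + d.+1, d.+1) :=
  col_mx (U *m diag_sqrt g) (invmx S12 *m V *m diag_sqrt g).

Lemma SelemE J : Selem J = Sfactor *m J^T *m invmx S12.
Proof. by rewrite /Selem /Sfactor !mul_col_mx. Qed.

Lemma Pmat_factor : Pmat p Sigma = P12^T *m P12.
Proof.
rewrite /Pmat tr_block_mx !trmx0 trmx1 S12T mulmx_block.
by rewrite !mul1mx !mulmx0 !mul0mx !addr0 !add0r S12S12.
Qed.

Lemma Selem_minimizer_sym (Th : 'M[R]_(p + d.+1, d.+1)) J :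
  J^T *m J = 1%:M ->
  (forall th, inS U g V S12 th ->
     Pnorm (Pmat p Sigma) (Th - Selem J) <= Pnorm (Pmat p Sigma) (Th - th)) ->
  ((Th - Selem J)^T *m Pmat p Sigma *m Selem J *m Sigma)^T =
   (Th - Selem J)^T *m Pmat p Sigma *m Selem J *m Sigma.
Proof.
move=> JJ Selem_min; set Delta := Th - Selem J; set Y := J^T *m invmx S12.
set P := Pmat p Sigma.
have PT : P^T = P by rewrite /P Pmat_factor trmx_mul trmxK.
have N_sym : (Y *m Delta^T *m P *m Sfactor)^T = Y *m Delta^T *m P *m Sfactor.
  apply: minimizer_sym PT _ => G GG.
  have -> : Delta - Sfactor *m (G - 1%:M)^T *m Y = Th - Selem (J *m G).
    rewrite /Delta /Y !SelemE linearB /= trmx1 [(J *m G)^T]trmx_mul mulmxBr mulmxBl mulmx1.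
    by rewrite !mulmxA opprB addrA subrK.
  apply: Pnorm_le_mxtrace Pmat_factor (Selem_min _ _).
  exists (J *m G); split => //.
  by rewrite /Defs.orthogonal trmx_mul mulmxA -(mulmxA G^T) JJ mulmx1.
have JJt : J *m J^T = 1%:M by apply: mulmx1C.
have -> : Delta^T *m P *m Selem J *m Sigma =
          (J^T *m S12)^T *m (Y *m Delta^T *m P *m Sfactor) *m (J^T *m S12).
  rewrite SelemE -S12S12 trmx_mul trmxK S12T /Y !mulmxA -(mulmxA S12 J) JJt mulmx1.
  by rewrite mulmxV // mul1mx -!mulmxA (mulmxA (invmx S12)) mulVmx // mul1mx.
move: N_sym; move: (Y *m Delta^T *m P *m Sfactor) => N N_sym.
by rewrite !trmx_mul !trmxK N_sym !mulmxA.
Qed.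

Lemma Selem_sqnorm_bounds J (sS : 'rV[R]_d.+1) (lo hi : R) (x : 'cV[R]_d.+1) :
  J^T *m J = 1%:M -> U^T *m U = 1%:M -> V^T *m V = 1%:M -> singvals Sigma sS ->
  0 <= lo -> (forall i, lo <= g 0 i <= hi) ->
  2 * lo * sS 0 ord_max * sqnorm x <= sqnorm (P12 *m Selem J *m Sigma *m x)
    <= 2 * hi * sS 0 ord0 * sqnorm x.
Proof.
move=> JJ UU VV svS lo_ge0 g_bounds.
have hi_ge0 : 0 <= hi by case/andP: (g_bounds ord0) => g_lo g_hi; lra.
set y := J^T *m S12 *m x.
have -> : sqnorm (P12 *m Selem J *m Sigma *m x) = 2 * sqnorm (diag_sqrt g *m y).
  rewrite SelemE /Sfactor !mulmxA mul_block_col !mul1mx !mul0mx addr0 add0r.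
  rewrite !mul_col_mx sqnorm_col_mx /y -S12S12 -!mulmxA (sqnorm_isometry _ UU).
  rewrite (mulmxA S12 (invmx S12)) mulmxV // mul1mx (sqnorm_isometry _ VV).
  by rewrite (mulmxA (invmx S12)) mulVmx // mul1mx mulr_natl mulr2n.
have /andP[y_lo y_hi] : lo * sqnorm y <= sqnorm (diag_sqrt g *m y) <= hi * sqnorm y.
  apply: sqnorm_diag_mx_bounds => i; rewrite mxE sqr_sqrtr //.
  by case/andP: (g_bounds i) => /(le_trans lo_ge0).
have yE : sqnorm y = (x^T *m Sigma *m x) 0 0.
  have JT_iso : J^T^T *m J^T = 1%:M by rewrite trmxK; apply: mulmx1C.
  rewrite /y -mulmxA (sqnorm_isometry _ JT_iso).
  by rewrite /sqnorm trmx_mul S12T -S12S12 !mulmxA.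
have /andP[x_lo x_hi] := quad_singvals_bounds x S12T S12_unit S12S12 svS.
rewrite -yE in x_lo x_hi; rewrite -!mulrA !ler_pM2l //; apply/andP; split.
  exact: le_trans (ler_wpM2l lo_ge0 x_lo) y_lo.
exact: le_trans y_hi (ler_wpM2l hi_ge0 x_hi).
Qed.

End ProjectionOntoS.

Theorem lemma1 (R : realType) (p d : nat)
  (Sigma : 'M[R]_d.+1) (M : 'M[R]_(p, d.+1)) (S12 : 'M[R]_d.+1)
  (U : 'M[R]_(p, d.+1)) (g : 'rV[R]_d.+1) (V : 'M[R]_d.+1)
  (A : 'M[R]_(p, d.+1)) (B : 'M[R]_d.+1) (thstar : 'M[R]_(p + d.+1, d.+1)) :
  (d.+1 <= p)%N ->
  posdef Sigma ->
  (* S12 = Sigma^{1/2}, the positive definite square root *)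
  posdef S12 -> S12 *m S12 = Sigma ->
  \rank (M *m S12) = d.+1 ->
  (* U Gamma V^T is an SVD of M Sigma^{1/2}, Gamma = diag g positive definite *)
  U^T *m U = 1%:M -> V^T *m V = 1%:M -> (forall i, 0 < g 0 i) ->
  M *m S12 = U *m diag_mx g *m V^T ->
  (* thstar is the P-norm projection of theta = (A, B) onto S *)
  inS U g V S12 thstar ->
  (forall th, inS U g V S12 th ->
     Pnorm (Pmat p Sigma) (col_mx A B - thstar)
       <= Pnorm (Pmat p Sigma) (col_mx A B - th)) ->
  let Delta := col_mx A B - thstar in
  let P := Pmat p Sigma in
  let P12 : 'M[R]_(p + d.+1) := block_mx 1%:M 0 0 S12 in
  (* 1. symmetry *)
  (Delta^T *m P *m thstar *m Sigma)^T = Delta^T *m P *m thstar *m Sigma /\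
  (* 2. bounds on extreme singular values, for the ordered singular values *)
  (forall sMS sS sT : 'rV[R]_d.+1,
     singvals (M *m S12) sMS -> singvals Sigma sS ->
     singvals (P12 *m thstar *m Sigma) sT ->
     let K0 := 2 * sMS 0 ord_max * sS 0 ord_max in
     let K1 := 2 * sMS 0 ord0 * sS 0 ord0 in
     K0 <= sT 0 ord_max ^+ 2 /\ sT 0 ord0 ^+ 2 <= K1).
Proof.
move=> _ _ S12_pd SS _ UU VV g_gt0 MS_svd [J [JJ ->]] Selem_min Delta P P12.
have [S12T _] := S12_pd; have S12_unit := posdef_unitmx S12_pd.
split; first exact: Selem_minimizer_sym.
move=> sMS sS sT svMS svS svT K0 K1.
have MS_is_svd : is_svd (M *m S12) U g V by split => // i; apply: ltW.
have g_bounds := singvals_is_svd_bounds svMS MS_is_svd.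
have sMS_ge0 : 0 <= sMS 0 ord_max by case: svMS => _ [? [? [_ _ ? _]]].
apply: (singvals_extreme_bounds svT) => x.
exact: Selem_sqnorm_bounds.
Qed.
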